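(* Let $|\psi\rangle$ be a pure three-qubit state. Suppose that the inequality $\mathcal C_{ik}^2+\mathcal C_{jk}^2\ge\frac89$ holds for at least two of the three choices of $\{i,j,k\}=\{A,B,C\}$ (i.e. for at least two choices of the index $k$). Then steering correlations obey monogamy: at most one of $S_{AB},S_{AC},S_{BC}$ exceeds $1$.
   Context: For a two-qubit state $\rho$ let $t_{kl}=\mathrm{Tr}[\rho\,\sigma_k\otimes\sigma_l]$ ($\sigma_k$ Pauli matrices) and $S(\rho)=\sum_{k,l=1}^3 t_{kl}^2$; $\rho_{ij}$ is the reduced state of qubits $i,j$ and $S_{ij}=S(\rho_{ij})$. $S_{ij}>1$ is equivalent to $\rho_{ij}$ violating the three-settings CJWR linear steering inequality. $\mathcal C_{ij}$ is the Wootters concurrence of $\rho_{ij}$: $\mathcal C(\rho)=\max\{0,\lambda_1-\lambda_2-\lambda_3-\lambda_4\}$, with $\lambda_1\ge\dots\ge\lambda_4$ the square roots of the eigenvalues of $\rho(\sigma_2\otimes\sigma_2)\rho^*(\sigma_2\otimes\sigma_2)$. Monogamy of steering means that at most one of the three reduced states violates the inequality. *)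

(* Complex numbers are R[i] (mathcomp-real-closed) for
   R : realType (a model of the real numbers); all definitions below are
   stated for an arbitrary numClosedFieldType C and instantiated at R[i]. *)
From mathcomp Require Import all_boot all_order all_algebra.
From mathcomp Require Import reals.
From mathcomp.real_closed Require Import complex mxtens.
Set Implicit Arguments. Unset Strict Implicit. Unset Printing Implicit Defensive.
Import Order.TTheory GRing.Theory Num.Theory.
Local Open Scope ring_scope.

Section QuantumDefs.
Variable C : numClosedFieldType.

Definition sigma1 : 'M[C]_2 := \matrix_(i < 2, j < 2) (if i == j then 0 else 1).
Definition sigma2 : 'M[C]_2 :=
  \matrix_(i < 2, j < 2)
    (if i == j then 0 else if (i : nat) == 0%N then - 'i else 'i).
Definition sigma3 : 'M[C]_2 :=
  \matrix_(i < 2, j < 2)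
    (if i == j then (if (i : nat) == 0%N then 1 else -1) else 0).
Definition pauli (k : 'I_3) : 'M[C]_2 :=
  if (k : nat) == 0%N then sigma1 else if (k : nat) == 1%N then sigma2 else sigma3.

(* Two-qubit operators: 'M_(2*2), index (a,b) <-> 2a+b (mxtens convention,
   so that (A *t B) is the Kronecker product A (x) B). *)

(* t_kl = Tr[rho sigma_k (x) sigma_l],  k,l = 1..3 (here indices 0..2). *)
Definition tcorr (rho : 'M[C]_(2 * 2)) (k l : 'I_3) : C :=
  \tr (rho *m (pauli k *t pauli l)).
Definition Sval (rho : 'M[C]_(2 * 2)) : C :=
  \sum_(k < 3) \sum_(l < 3) tcorr rho k l ^+ 2.

Definition conjmx (A : 'M[C]_(2 * 2)) : 'M[C]_(2 * 2) := map_mx Num.conj A.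
Definition wootR (rho : 'M[C]_(2 * 2)) : 'M[C]_(2 * 2) :=
  rho *m (sigma2 *t sigma2) *m conjmx rho *m (sigma2 *t sigma2).
Definition eigvals (A : 'M[C]_(2 * 2)) : seq C :=
  sval (closed_field_poly_normal (char_poly A)).
Definition wootlambda (rho : 'M[C]_(2 * 2)) : seq C :=
  sort (fun x y : C => y <= x) (map sqrtC (eigvals (wootR rho))).
Definition concurrence (rho : 'M[C]_(2 * 2)) : C :=
  let l := wootlambda rho in Num.max 0 (l`_0 - l`_1 - l`_2 - l`_3).

(* Three-qubit pure states: amplitudes psi a b c = <abc|psi>. *)
Definition normalized (psi : 'I_2 -> 'I_2 -> 'I_2 -> C) : Prop :=
  \sum_(a < 2) \sum_(b < 2) \sum_(c < 2) `|psi a b c| ^+ 2 = 1.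

Definition idx1 (i : 'I_(2 * 2)) : 'I_2 := (mxtens_unindex i).1.
Definition idx2 (i : 'I_(2 * 2)) : 'I_2 := (mxtens_unindex i).2.

Definition rhoAB (psi : 'I_2 -> 'I_2 -> 'I_2 -> C) : 'M[C]_(2 * 2) :=
  \matrix_(i, j) \sum_(c < 2)
     psi (idx1 i) (idx2 i) c * Num.conj (psi (idx1 j) (idx2 j) c).
Definition rhoAC (psi : 'I_2 -> 'I_2 -> 'I_2 -> C) : 'M[C]_(2 * 2) :=
  \matrix_(i, j) \sum_(b < 2)
     psi (idx1 i) b (idx2 i) * Num.conj (psi (idx1 j) b (idx2 j)).
Definition rhoBC (psi : 'I_2 -> 'I_2 -> 'I_2 -> C) : 'M[C]_(2 * 2) :=
  \matrix_(i, j) \sum_(a < 2)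
     psi a (idx1 i) (idx2 i) * Num.conj (psi a (idx1 j) (idx2 j)).

End QuantumDefs.

(* For a pure state every two-qubit reduced state has rank at most two: rho_AB = U U^*, with
   U the 4 x 2 matrix of amplitudes whose columns are indexed by qubit C. The Wootters matrix
   rho (sy x sy) rho^* (sy x sy) then has the spectrum of conj(tau) tau padded with two zeros,
   where tau = U^T (sy x sy) U is a symmetric 2 x 2 matrix, and C_AB^2 = |tau|_F^2 - 2 |det tau|;
   |det tau| is a quarter of the three-tangle, hence the same for the three pairs.
   Expanding the Pauli correlations gives S_AB - 1 = 2 C_AB^2 - C_AC^2 - C_BC^2 for a normalized
   state, and symmetrically for the other pairs. Moreover C_AB^2 + C_AC^2 + C_BC^2 <= 4/3: after
   a change of basis of qubit A that makes the upper-left entry of tau_BC vanish, the sum is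
   at most 4 P Q + Q^2 with P + Q = 1. So C_ik^2 + C_jk^2 >= 8/9 forces
   S_ij - 1 <= 2 * 4/3 - 3 * 8/9 = 0, and two such conditions leave at most one S_ij above 1. *)

From Pilot Require Import Defs.
From mathcomp Require Import all_boot all_order all_algebra.
From mathcomp Require Import reals.
From mathcomp Require Import ring.
From mathcomp.real_closed Require Import complex mxtens.
Set Implicit Arguments. Unset Strict Implicit. Unset Printing Implicit Defensive.
Import Order.TTheory GRing.Theory Num.Theory.
Local Open Scope ring_scope.

Lemma big_ord2 (R : nmodType) (F : 'I_2 -> R) :
  \sum_(i < 2) F i = F ord0 + F ord_max.
Proof. by rewrite !big_ord_recl big_ord0 addr0; congr (_ + F _); apply: val_inj. Qed.

Lemma big_ord3 (R : nmodType) (F : 'I_3 -> R) :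
  \sum_(k < 3) F k = F (@Ordinal 3 0 isT) + F (@Ordinal 3 1 isT) + F (@Ordinal 3 2 isT).
Proof.
by rewrite !big_ord_recl big_ord0 addr0 addrA; congr (F _ + F _ + F _); apply: val_inj.
Qed.

Lemma det_mx2 (R : comNzRingType) (A : 'M[R]_2) :
  \det A = A ord0 ord0 * A ord_max ord_max - A ord0 ord_max * A ord_max ord0.
Proof.
rewrite (expand_det_row _ ord0) big_ord2 /cofactor !det_mx11 !mxE /=.
rewrite expr0 expr1 !mul1r mulN1r mulrN; congr (_ * A _ _ - _ * A _ _); exact: val_inj.
Qed.

Lemma char_poly_mx2 (R : comNzRingType) (A : 'M[R]_2) :
  char_poly A = 'X^2 - (\tr A) *: 'X + (\det A)%:P.
Proof.
apply/polyP => i; rewrite !coefD !coefN coefZ !coefXn coefX coefC.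
case: i => [|[|[|i]]] /=.
- by rewrite char_poly_det expr2 mulN1r opprK mul1r mulr0 subr0 add0r.
- by rewrite (char_poly_trace A) // mulr1 add0r addr0.
- have /monicP := char_poly_monic A.
  by rewrite /lead_coef size_char_poly => ->; rewrite mulr0 subr0 addr0.
- by rewrite mulr0 subr0 addr0 nth_default // size_char_poly.
Qed.

Lemma char_poly_mulmxC (R : comNzRingType) m n (A : 'M[R]_(m, n)) (B : 'M[R]_(n, m)) :
  'X^n * char_poly (A *m B) = 'X^m * char_poly (B *m A).
Proof.
pose A' := map_mx polyC A; pose B' := map_mx polyC B.
pose M := block_mx ('X%:M : 'M[{poly R}]_m) A' B' 1%:M.
have lowM : block_mx 1%:M (- A') 0 'X%:M *m M
    = block_mx (char_poly_mx (A *m B)) 0 ('X *: B') 'X%:M.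
  rewrite /M mulmx_block mul1mx mul0mx mul1mx add0r mulNmx mulmx1.
  rewrite mul0mx add0r subrr mul_scalar_mx mulmx1.
  by rewrite /char_poly_mx map_mxM.
have uppM : block_mx 1%:M 0 (- B') 'X%:M *m M
    = block_mx 'X%:M A' 0 (char_poly_mx (B *m A)).
  rewrite /M mulmx_block !mul1mx !mul0mx !addr0 !mulNmx mulmx1.
  rewrite mul_scalar_mx scalar_mxC mul_scalar_mx addrC subrr addrC.
  by rewrite /char_poly_mx map_mxM.
move: (congr1 determinant lowM) (congr1 determinant uppM).
rewrite !det_mulmx det_lblock det_ublock det_lblock det_ublock !det_scalar.
by rewrite expr1n !mul1r /char_poly => -> <-; rewrite mulrC.
Qed.

Lemma tensmxNN (R : comPzRingType) m n p q (A : 'M[R]_(m, n)) (B : 'M[R]_(p, q)) :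
  (- A) *t (- B) = A *t B.
Proof. by apply/matrixP => i j; rewrite !mxE mulrNN. Qed.

Lemma tensmxZl (R : comPzRingType) m n p q (a : R) (A : 'M[R]_(m, n)) (B : 'M[R]_(p, q)) :
  (a *: A) *t B = a *: (A *t B).
Proof. by apply/matrixP => i j; rewrite !mxE mulrA. Qed.

Lemma tensmxZr (R : comPzRingType) m n p q (a : R) (A : 'M[R]_(m, n)) (B : 'M[R]_(p, q)) :
  A *t (a *: B) = a *: (A *t B).
Proof. by apply/matrixP => i j; rewrite !mxE mulrCA. Qed.

Section Concurrence.
Variable C : numClosedFieldType.
Implicit Types (G : 'M[C]_2) (U : 'M[C]_(2 * 2, 2)).

Definition spin_flip : 'M[C]_(2 * 2) := sigma2 C *t sigma2 C.
Definition rho_of U : 'M[C]_(2 * 2) := U *m (map_mx Num.conj U)^T.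
Definition tau_mx U : 'M[C]_2 := U^T *m spin_flip *m U.
Definition frob2 G : C := \sum_(i < 2) \sum_(j < 2) `|G i j| ^+ 2.

Lemma map_mx_conjK m n (A : 'M[C]_(m, n)) : map_mx Num.conj (map_mx Num.conj A) = A.
Proof. by apply/matrixP => i j; rewrite !mxE conjCK. Qed.

Lemma conj_sigma2 : map_mx Num.conj (sigma2 C) = - sigma2 C.
Proof.
apply/matrixP => i j; rewrite !mxE; case: (i == j); first by rewrite conjC0 oppr0.
by case: ((i : nat) == 0%N); rewrite ?rmorphN /= conjCi ?opprK.
Qed.

Lemma tr_sigma2 : (sigma2 C)^T = - sigma2 C.
Proof.
apply/matrixP => i j; rewrite !mxE.
by case: i => [[|[|i]] Hi] //; case: j => [[|[|j]] Hj] //=; rewrite ?oppr0 ?opprK.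
Qed.

Lemma conj_spin_flip : map_mx Num.conj spin_flip = spin_flip.
Proof. by rewrite /spin_flip map_mxT conj_sigma2 tensmxNN. Qed.

Lemma tr_spin_flip : spin_flip^T = spin_flip.
Proof. by rewrite /spin_flip trmx_tens tr_sigma2 tensmxNN. Qed.

Lemma tr_tau_mx U : (tau_mx U)^T = tau_mx U.
Proof. by rewrite /tau_mx !trmx_mul trmxK tr_spin_flip mulmxA. Qed.

Lemma tau_mx_sym U i j : tau_mx U i j = tau_mx U j i.
Proof. by rewrite -[in LHS]tr_tau_mx mxE. Qed.

Lemma char_poly_wootR_rho_of U :
  char_poly (wootR (rho_of U))
  = 'X^2 * char_poly (map_mx Num.conj (tau_mx U) *m tau_mx U).
Proof.
pose V := (map_mx Num.conj U)^T *m spin_flip *m map_mx Num.conj U *m U^T *m spin_flip.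
have -> : wootR (rho_of U) = U *m V.
  by rewrite /V /wootR /rho_of /Defs.conjmx map_mxM map_trmx map_mx_conjK !mulmxA.
have -> : map_mx Num.conj (tau_mx U) *m tau_mx U = V *m U.
  by rewrite /V /tau_mx !map_mxM map_trmx conj_spin_flip !mulmxA.
apply: (@mulfI _ 'X^2); first by rewrite expf_neq0 // polyX_eq0.
by rewrite char_poly_mulmxC mulrA -exprD.
Qed.

Lemma tr_conj_mulmx_sym G : G^T = G -> \tr (map_mx Num.conj G *m G) = frob2 G.
Proof.
move=> /matrixP G_sym; rewrite /mxtrace /frob2; apply: eq_bigr => i _.
rewrite mxE; apply: eq_bigr => j _.
by rewrite !mxE -[G j i]G_sym mxE normCKC.
Qed.

Lemma det_le_frob2 G : 2 * `|\det G| <= frob2 G.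
Proof.
rewrite det_mx2 /frob2 !big_ord2.
set a := G ord0 ord0; set b := G ord0 ord_max; set c := G ord_max ord0.
set d := G ord_max ord_max.
have [amgm_ad _] := real_leif_mean_square_scaled (normr_real a) (normr_real d).
have [amgm_bc _] := real_leif_mean_square_scaled (normr_real b) (normr_real c).
apply: (le_trans (y := 2 * (`|a| * `|d| + `|b| * `|c|))).
  by rewrite ler_pM2l ?ltr0n // -!normrM ler_normB.
have -> : 2 * (`|a| * `|d| + `|b| * `|c|) = `|a| * `|d| *+ 2 + `|b| * `|c| *+ 2.
  by rewrite !mulr2n; ring.
apply: le_trans (lerD amgm_ad amgm_bc) _.
by rewrite le_eqVlt; apply/orP; left; apply/eqP; ring.
Qed.

Lemma sort_ge_nonneg (s t : seq C) :
  all (fun x => 0 <= x) t -> sorted (fun x y => y <= x) t -> perm_eq s t ->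
  sort (fun x y : C => y <= x) s = t.
Proof.
move=> /allP t_ge0 t_sorted st.
have ge_trans : transitive (fun x y : C => y <= x) by move=> x y z /[swap]; apply: le_trans.
have s_real x : x \in s -> x \is Num.real by rewrite (perm_mem st) => /t_ge0/ger0_real.
rewrite -[RHS](sorted_sort ge_trans t_sorted); apply/perm_sort_inP => //.
- by move=> x y /s_real xR /s_real yR; apply: real_leVge.
- by move=> x y z _ _ _; apply: ge_trans.
- by move=> x y _ _ /andP[yx xy]; apply/eqP; rewrite eq_le xy yx.
Qed.

Lemma perm_eigvals (A : 'M[C]_(2 * 2)) (zs : seq C) :
  char_poly A = \prod_(z <- zs) ('X - z%:P) -> perm_eq (eigvals A) zs.
Proof.
rewrite /eigvals; case: closed_field_poly_normal => r /= charA_r charA_zs.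
apply: prod_XsubC_eq; rewrite -charA_zs charA_r.
by have /monicP -> := char_poly_monic A; rewrite scale1r.
Qed.

Lemma concurrence_perm rho (a b : C) : 0 <= b -> b <= a ->
  perm_eq (map sqrtC (eigvals (wootR rho))) [:: a; b; 0; 0] ->
  concurrence rho = a - b.
Proof.
move=> b_ge0 le_ba perm_ab; rewrite /concurrence.
have -> : wootlambda rho = [:: a; b; 0; 0].
  apply: sort_ge_nonneg => //=; first by rewrite b_ge0 (le_trans b_ge0 le_ba) lexx.
  by rewrite le_ba b_ge0 lexx.
by rewrite /= !subr0; apply/max_idPr; rewrite subr_ge0.
Qed.

Lemma nonneg_roots_sum_mul (t e : C) : 0 <= e -> 2 * e <= t ->
  exists m1 m2 : C, [/\ 0 <= m2, m2 <= m1, m1 + m2 = t & m1 * m2 = e ^+ 2].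
Proof.
move=> e_ge0 le_2e_t.
have t_ge0 : 0 <= t by apply: le_trans le_2e_t; rewrite mulr_ge0 ?ler0n.
have disc_ge0 : 0 <= t ^+ 2 - 4 * e ^+ 2.
  rewrite subr_ge0 (_ : 4 * e ^+ 2 = (2 * e) ^+ 2); last by rewrite exprMn -natrX.
  by rewrite ler_pXn2r // nnegrE mulr_ge0 ?ler0n.
pose s := sqrtC (t ^+ 2 - 4 * e ^+ 2).
have s_ge0 : 0 <= s by rewrite sqrtC_ge0.
have le_st : s <= t.
  rewrite -(ler_pXn2r (n := 2)) // ?nnegrE // sqrtCK lerBlDr lerDl.
  by rewrite mulr_ge0 ?ler0n ?exprn_ge0.
exists ((t + s) / 2), ((t - s) / 2); split.
- by rewrite mulr_ge0 ?subr_ge0 ?invr_ge0 ?ler0n.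
- by rewrite ler_pM2r ?invr_gt0 ?ltr0n // lerD2l (le_trans _ s_ge0) // oppr_le0.
- by field; rewrite ?pnatr_eq0.
- have -> : (t + s) / 2 * ((t - s) / 2) = (t ^+ 2 - s ^+ 2) / 4.
    by field; rewrite ?pnatr_eq0.
  by rewrite sqrtCK; field; rewrite ?pnatr_eq0.
Qed.

Lemma sqr_concurrence_rho_of U :
  concurrence (rho_of U) ^+ 2 = frob2 (tau_mx U) - 2 * `|\det (tau_mx U)|.
Proof.
set G := tau_mx U.
have [m1 [m2 [m2_ge0 le_m21 sum_m12 mul_m12]]] :=
  nonneg_roots_sum_mul (normr_ge0 (\det G)) (det_le_frob2 G).
have m1_ge0 : 0 <= m1 := le_trans m2_ge0 le_m21.
have char_woot : char_poly (wootR (rho_of U)) = \prod_(z <- [:: 0; 0; m1; m2]) ('X - z%:P).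
  rewrite char_poly_wootR_rho_of char_poly_mx2 tr_conj_mulmx_sym ?tr_tau_mx //.
  rewrite det_mulmx det_map_mx /= -normCKC -sum_m12 -mul_m12 !big_cons big_nil.
  by rewrite !subr0 polyCM -!mul_polyC polyCD; ring.
have perm_sqrt : perm_eq (map sqrtC (eigvals (wootR (rho_of U))))
                        [:: sqrtC m1; sqrtC m2; 0; 0].
  rewrite (perm_trans (perm_map sqrtC (perm_eigvals char_woot))) //= sqrtC0.
  by rewrite -(perm_rot 2).
rewrite (concurrence_perm _ _ perm_sqrt) ?sqrtC_ge0 ?ler_sqrtC ?nnegrE //.
rewrite sqrrB !sqrtCK -sqrtCM ?nnegrE // mul_m12 sqrCK // -sum_m12 -mulr_natl.
by ring.
Qed.

End Concurrence.

Section Coordinates.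
Variable C : numClosedFieldType.
Implicit Types (G : 'M[C]_2) (U : 'M[C]_(2 * 2, 2)).

Definition tidx (a b : 'I_2) : 'I_(2 * 2) := mxtens_index (a, b).

Lemma idx1_tidx a b : idx1 (tidx a b) = a.
Proof. by rewrite /idx1 /tidx mxtens_indexK. Qed.

Lemma idx2_tidx a b : idx2 (tidx a b) = b.
Proof. by rewrite /idx2 /tidx mxtens_indexK. Qed.

Lemma sum_tidx (R : nmodType) (F : 'I_(2 * 2) -> R) :
  \sum_(i < 2 * 2) F i = \sum_(a < 2) \sum_(b < 2) F (tidx a b).
Proof.
rewrite pair_big /= (reindex (fun p : 'I_2 * 'I_2 => tidx p.1 p.2)) //.
exists (@mxtens_unindex 2 2) => [[a b] _|i _]; first by rewrite /tidx mxtens_indexK.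
by rewrite /tidx -surjective_pairing mxtens_unindexK.
Qed.

Definition epsmx : 'M[C]_2 :=
  \matrix_(i, j) (if i == j then 0 else if (i : nat) == 0%N then -1 else 1).

Lemma sigma2_epsmx : sigma2 C = 'i *: epsmx.
Proof.
apply/matrixP => i j; rewrite !mxE; case: ifP => _; first by rewrite mulr0.
by case: ifP => _; rewrite ?mulrN1 ?mulr1.
Qed.

Lemma spin_flipE a b a' b' :
  spin_flip C (tidx a b) (tidx a' b') = - (epsmx a a' * epsmx b b').
Proof. by rewrite /spin_flip tensmxE sigma2_epsmx !mxE mulrACA -expr2 sqrCi mulN1r. Qed.

Lemma sqr_tr_mulmx_i (rho M : 'M[C]_(2 * 2)) :
  \tr (rho *m ('i *: M)) ^+ 2 = - \tr (rho *m M) ^+ 2.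
Proof. by rewrite -scalemxAr mxtraceZ exprMn sqrCi mulN1r. Qed.

Lemma tr_mulmx_tensE (rho : 'M[C]_(2 * 2)) (A B : 'M[C]_2) :
  \tr (rho *m (A *t B)) = \sum_(a < 2) \sum_(b < 2) \sum_(a' < 2) \sum_(b' < 2)
    rho (tidx a b) (tidx a' b') * (A a' a * B b' b).
Proof.
rewrite /mxtrace sum_tidx; apply: eq_bigr => a _; apply: eq_bigr => b _.
rewrite mxE sum_tidx; apply: eq_bigr => a' _; apply: eq_bigr => b' _.
by rewrite tensmxE.
Qed.

Definition flipform (x y : 'I_2 -> 'I_2 -> C) : C :=
  x ord0 ord_max * y ord_max ord0 + x ord_max ord0 * y ord0 ord_max
  - x ord0 ord0 * y ord_max ord_max - x ord_max ord_max * y ord0 ord0.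

Lemma tau_mxE U c c' :
  tau_mx U c c' = flipform (fun a b => U (tidx a b) c) (fun a b => U (tidx a b) c').
Proof.
rewrite /tau_mx mxE sum_tidx !big_ord2 !mxE !sum_tidx !big_ord2 !spin_flipE !mxE /=.
by rewrite /flipform; ring.
Qed.

Lemma norm_flipform_le x :
  `|flipform x x| <= \sum_(a < 2) \sum_(b < 2) `|x a b| ^+ 2.
Proof.
rewrite !big_ord2 /flipform.
set p := x ord0 ord0; set q := x ord0 ord_max; set r := x ord_max ord0.
set s := x ord_max ord_max.
have -> : q * r + r * q - p * s - s * p = q * r *+ 2 - p * s *+ 2.
  by rewrite !mulr2n; ring.
have [amgm_qr _] := real_leif_mean_square_scaled (normr_real q) (normr_real r).
have [amgm_ps _] := real_leif_mean_square_scaled (normr_real p) (normr_real s).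
apply: le_trans (ler_normB _ _) _; rewrite !normrMn !normrM.
apply: le_trans (lerD amgm_qr amgm_ps) _.
by rewrite le_eqVlt; apply/orP; left; apply/eqP; ring.
Qed.

End Coordinates.

Section TauGramBound.
Variable C : numClosedFieldType.
Implicit Types (G : 'M[C]_2) (U : 'M[C]_(2 * 2, 2)).

(* sqrt (quat_norm2 s0 s1) times a unitary: right multiplication by it is a change of basis
   of the column qubit, which rescales all the invariants below. *)
Definition quatmx (s0 s1 : C) : 'M[C]_2 :=
  \matrix_(i, j) (if (i : nat) == 0%N then (if (j : nat) == 0%N then s0 else - s1^*)
                  else (if (j : nat) == 0%N then s1 else s0^*)).

Definition quat_norm2 (s0 s1 : C) : C := `|s0| ^+ 2 + `|s1| ^+ 2.

Section Quaternion.
Variables s0 s1 : C.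
Local Notation Q := (quatmx s0 s1).
Local Notation k := (quat_norm2 s0 s1).

Lemma quat_norm2_ge0 : 0 <= k.
Proof. by rewrite addr_ge0 ?exprn_ge0. Qed.

Lemma quatmx_mul_adj : Q *m (map_mx Num.conj Q)^T = k%:M.
Proof.
apply/matrixP => i j; rewrite !mxE big_ord2 !mxE.
case: i => [[|[|i]] Hi] //; case: j => [[|[|j]] Hj] //=;
  rewrite /quat_norm2 !normCK ?rmorphN /= ?conjCK; ring.
Qed.

Lemma det_quatmx : \det Q = k.
Proof. by rewrite det_mx2 !mxE /= /quat_norm2 !normCK; ring. Qed.

Lemma quatmx_congr00 G : (Q^T *m G *m Q) ord0 ord0
  = G ord0 ord0 * s0 ^+ 2 + (G ord0 ord_max + G ord_max ord0) * s0 * s1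
    + G ord_max ord_max * s1 ^+ 2.
Proof. by rewrite !mxE !big_ord2 !mxE !big_ord2 !mxE /=; ring. Qed.

Lemma frob2_quatmx G : frob2 (Q^T *m G *m Q) = k ^+ 2 * frob2 G.
Proof.
rewrite /frob2 !big_ord2 !mxE !big_ord2 !mxE !big_ord2 !mxE /= /quat_norm2 !normCK.
by rewrite !(rmorphD, rmorphM, rmorphN) /= !conjCK; ring.
Qed.

End Quaternion.

Lemma quatmx_isotropic G : G^T = G ->
  exists s0 s1, quat_norm2 s0 s1 != 0 /\ ((quatmx s0 s1)^T *m G *m quatmx s0 s1) ord0 ord0 = 0.
Proof.
move=> G_tr; have G_sym : G ord_max ord0 = G ord0 ord_max by rewrite -{1}G_tr mxE.
set a := G ord0 ord0; set b := G ord0 ord_max; set c := G ord_max ord_max.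
have [a0|a_neq0] := eqVneq a 0.
  exists 1, 0; split; last by rewrite quatmx_congr00 -/a a0; ring.
  by rewrite /quat_norm2 normr1 normr0 expr1n expr0n addr0 oner_eq0.
pose D := sqrtC (b ^+ 2 - a * c).
exists ((- b + D) / a), 1; split.
  by rewrite /quat_norm2 normr1 expr1n lt0r_neq0 // ltr_wpDl ?exprn_ge0 ?ltr01.
rewrite quatmx_congr00 G_sym -/a -/b -/c.
have -> : a * ((- b + D) / a) ^+ 2 + (b + b) * ((- b + D) / a) * 1 + c * 1 ^+ 2
    = (D ^+ 2 - (b ^+ 2 - a * c)) / a by field.
by rewrite /D sqrtCK subrr mul0r.
Qed.

Definition gram U : 'M[C]_2 := (map_mx Num.conj U)^T *m U.

Lemma gram_mulmx U (S : 'M[C]_2) :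
  gram (U *m S) = (map_mx Num.conj S)^T *m gram U *m S.
Proof. by rewrite /gram map_mxM trmx_mul !mulmxA. Qed.

Lemma tau_mx_mulmx U (S : 'M[C]_2) : tau_mx (U *m S) = S^T *m tau_mx U *m S.
Proof. by rewrite /tau_mx trmx_mul !mulmxA. Qed.

Lemma gram_diag U a : gram U a a = \sum_(a' < 2) \sum_(b' < 2) `|U (tidx a' b') a| ^+ 2.
Proof.
rewrite mxE sum_tidx; apply: eq_bigr => a' _; apply: eq_bigr => b' _.
by rewrite !mxE normCKC.
Qed.

Lemma gram_diag_ge0 U a : 0 <= gram U a a.
Proof.
by rewrite gram_diag; apply: sumr_ge0 => a' _; apply: sumr_ge0 => b' _; apply: exprn_ge0.
Qed.

Lemma det_gram_le U : \det (gram U) <= gram U ord0 ord0 * gram U ord_max ord_max.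
Proof.
have gram_adj : gram U ord_max ord0 = (gram U ord0 ord_max)^*.
  rewrite !mxE rmorph_sum; apply: eq_bigr => i _.
  by rewrite !mxE rmorphM /= conjCK mulrC.
by rewrite det_mx2 gram_adj -normCK lerBlDr lerDl exprn_ge0.
Qed.

Lemma norm_tau_mx_diag_le U a : `|tau_mx U a a| <= gram U a a.
Proof. by rewrite tau_mxE gram_diag; apply: norm_flipform_le. Qed.

Section QuaternionChange.
Variables (U : 'M[C]_(2 * 2, 2)) (s0 s1 : C).
Local Notation Q := (quatmx s0 s1).
Local Notation k := (quat_norm2 s0 s1).

Lemma conj_quat_norm2 : k^* = k.
Proof. by rewrite conj_Creal // ger0_real // quat_norm2_ge0. Qed.

Lemma tr_gram_quatmx : \tr (gram (U *m Q)) = k * \tr (gram U).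
Proof.
by rewrite gram_mulmx mxtrace_mulC mulmxA quatmx_mul_adj mul_scalar_mx mxtraceZ.
Qed.

Lemma det_gram_quatmx : \det (gram (U *m Q)) = k ^+ 2 * \det (gram U).
Proof.
rewrite gram_mulmx !det_mulmx det_tr det_map_mx /= det_quatmx conj_quat_norm2; ring.
Qed.

Lemma norm_det_tau_quatmx : `|\det (tau_mx (U *m Q))| = k ^+ 2 * `|\det (tau_mx U)|.
Proof.
rewrite tau_mx_mulmx !det_mulmx det_tr det_quatmx normrM normrM ger0_norm ?quat_norm2_ge0 //.
by rewrite mulrC mulrA -expr2.
Qed.

Lemma frob2_tau_quatmx : frob2 (tau_mx (U *m Q)) = k ^+ 2 * frob2 (tau_mx U).
Proof. by rewrite tau_mx_mulmx frob2_quatmx. Qed.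

End QuaternionChange.

Lemma gram_tau_bound_isotropic V : tau_mx V ord0 ord0 = 0 ->
  4 * (\det (gram V) - `|\det (tau_mx V)|) + (frob2 (tau_mx V) - 2 * `|\det (tau_mx V)|)
  <= 4%:R / 3%:R * \tr (gram V) ^+ 2.
Proof.
move=> tau00.
(* tau = [[0, x], [x, y]], so |det tau| = |x|^2 and frob2 tau - 2 |det tau| = |y|^2 <= R^2. *)
set P := gram V ord0 ord0; set R := gram V ord_max ord_max.
have P_ge0 : 0 <= P := gram_diag_ge0 V ord0.
have R_ge0 : 0 <= R := gram_diag_ge0 V ord_max.
have -> : frob2 (tau_mx V) - 2 * `|\det (tau_mx V)| = `|tau_mx V ord_max ord_max| ^+ 2.
  rewrite /frob2 !big_ord2 det_mx2 tau00 mul0r sub0r normrN (tau_mx_sym V ord_max ord0).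
  by rewrite normrM normr0; ring.
have -> : \tr (gram V) = P + R by rewrite /mxtrace big_ord2.
apply: (le_trans (y := 4 * (P * R) + R ^+ 2)).
  apply: lerD; last by rewrite ler_pXn2r ?nnegrE // norm_tau_mx_diag_le.
  rewrite ler_pM2l ?ltr0n // lerBlDr; apply: le_trans (det_gram_le V) _.
  by rewrite lerDl.
rewrite -subr_ge0 (_ : _ - _ = (2 * P - R) ^+ 2 / 3%:R); last by field; rewrite ?pnatr_eq0.
by rewrite divr_ge0 ?ler0n // real_exprn_even_ge0 // realB ?realM ?ger0_real.
Qed.

(* For U = flatAB (cycle3 psi) the left-hand side is C_AB^2 + C_AC^2 + C_BC^2. *)
Lemma gram_tau_bound U :
  4 * (\det (gram U) - `|\det (tau_mx U)|) + (frob2 (tau_mx U) - 2 * `|\det (tau_mx U)|)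
  <= 4%:R / 3%:R * \tr (gram U) ^+ 2.
Proof.
have [s0 [s1 [k_neq0 isotropic]]] := quatmx_isotropic (tr_tau_mx U).
have k_gt0 : 0 < quat_norm2 s0 s1 ^+ 2.
  by rewrite exprn_gt0 // lt_def k_neq0 quat_norm2_ge0.
rewrite -(ler_pM2l k_gt0).
have := gram_tau_bound_isotropic (V := U *m quatmx s0 s1).
rewrite tau_mx_mulmx isotropic => /(_ erefl).
rewrite -tau_mx_mulmx det_gram_quatmx norm_det_tau_quatmx frob2_tau_quatmx tr_gram_quatmx.
by congr (_ <= _); ring.
Qed.

End TauGramBound.

Section ThreeQubits.
Variable C : numClosedFieldType.
Implicit Type psi : 'I_2 -> 'I_2 -> 'I_2 -> C.

Definition flatAB psi : 'M[C]_(2 * 2, 2) := \matrix_(i, c) psi (idx1 i) (idx2 i) c.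
Definition swap12 psi : 'I_2 -> 'I_2 -> 'I_2 -> C := fun a b c => psi b a c.
Definition swap23 psi : 'I_2 -> 'I_2 -> 'I_2 -> C := fun a b c => psi a c b.
Definition cycle3 psi : 'I_2 -> 'I_2 -> 'I_2 -> C := fun a b c => psi c a b.
Definition psi_norm2 psi : C := \sum_(a < 2) \sum_(b < 2) \sum_(c < 2) `|psi a b c| ^+ 2.
Definition frob2_tauAB psi : C := frob2 (tau_mx (flatAB psi)).
Definition det_tauAB psi : C := \det (tau_mx (flatAB psi)).

Lemma flatAB_tidx psi a b c : flatAB psi (tidx a b) c = psi a b c.
Proof. by rewrite mxE idx1_tidx idx2_tidx. Qed.

Lemma rhoAB_rho_of psi : rhoAB psi = rho_of (flatAB psi).
Proof. by apply/matrixP => i j; rewrite !mxE; apply: eq_bigr => c _; rewrite !mxE. Qed.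

Lemma rhoAC_swap23 psi : rhoAC psi = rhoAB (swap23 psi).
Proof. by []. Qed.

Lemma rhoBC_cycle3 psi : rhoBC psi = rhoAB (cycle3 psi).
Proof. by []. Qed.

Lemma tau_flatAB_swap12 psi : tau_mx (flatAB (swap12 psi)) = tau_mx (flatAB psi).
Proof.
apply/matrixP => c c'; rewrite !tau_mxE /flipform !flatAB_tidx /swap12; ring.
Qed.

Lemma frob2_tauAB_swap12 psi : frob2_tauAB (swap12 psi) = frob2_tauAB psi.
Proof. by rewrite /frob2_tauAB tau_flatAB_swap12. Qed.

Lemma det_tauAB_swap23 psi : det_tauAB (swap23 psi) = det_tauAB psi.
Proof. by rewrite /det_tauAB !det_mx2 !tau_mxE /flipform !flatAB_tidx /swap23; ring. Qed.

Lemma det_tauAB_cycle3 psi : det_tauAB (cycle3 psi) = det_tauAB psi.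
Proof. by rewrite /det_tauAB !det_mx2 !tau_mxE /flipform !flatAB_tidx /cycle3; ring. Qed.

Lemma psi_norm2_swap23 psi : psi_norm2 (swap23 psi) = psi_norm2 psi.
Proof. by apply: eq_bigr => a _; rewrite exchange_big. Qed.

Lemma psi_norm2_cycle3 psi : psi_norm2 (cycle3 psi) = psi_norm2 psi.
Proof.
by rewrite /psi_norm2; under eq_bigr do rewrite exchange_big; rewrite exchange_big.
Qed.

Lemma tr_gram_flatAB psi : \tr (gram (flatAB psi)) = psi_norm2 psi.
Proof.
by rewrite /mxtrace big_ord2 !gram_diag /psi_norm2 !big_ord2 !flatAB_tidx; ring.
Qed.

Lemma sqr_concurrence_rhoAB psi :
  concurrence (rhoAB psi) ^+ 2 = frob2_tauAB psi - 2 * `|det_tauAB psi|.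
Proof. by rewrite rhoAB_rho_of sqr_concurrence_rho_of. Qed.

Lemma sqr_concurrences psi :
  [/\ concurrence (rhoAB psi) ^+ 2 = frob2_tauAB psi - 2 * `|det_tauAB psi|,
      concurrence (rhoAC psi) ^+ 2 = frob2_tauAB (swap23 psi) - 2 * `|det_tauAB psi|
    & concurrence (rhoBC psi) ^+ 2 = frob2_tauAB (cycle3 psi) - 2 * `|det_tauAB psi|].
Proof.
split; first exact: sqr_concurrence_rhoAB.
  by rewrite -(det_tauAB_swap23 psi); apply: sqr_concurrence_rhoAB.
by rewrite -(det_tauAB_cycle3 psi); apply: sqr_concurrence_rhoAB.
Qed.

Lemma frob2_tauAB_swap23_add psi :
  frob2_tauAB psi + frob2_tauAB (swap23 psi) = 4 * \det (gram (flatAB (cycle3 psi))).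
Proof.
rewrite /frob2_tauAB /frob2 !big_ord2 !tau_mxE /flipform !flatAB_tidx det_mx2.
rewrite !mxE !sum_tidx !big_ord2 !mxE !idx1_tidx !idx2_tidx /swap23 /cycle3.
by rewrite !normCK !(rmorphD, rmorphM, rmorphN) /=; ring.
Qed.

Lemma Sval_rhoAB psi : Sval (rhoAB psi) =
  psi_norm2 psi ^+ 2 + 2 * frob2_tauAB psi - frob2_tauAB (swap23 psi) - frob2_tauAB (cycle3 psi).
Proof.
(* Once the factors 'i of sigma2 are squared away, this is a polynomial identity in the
   amplitudes and their conjugates. *)
rewrite /Sval !big_ord3 /tcorr /pauli /= sigma2_epsmx !tensmxZl !tensmxZr.
rewrite !sqr_tr_mulmx_i !tr_mulmx_tensE !big_ord2 !mxE /= !idx1_tidx !idx2_tidx !big_ord2.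
rewrite /frob2_tauAB /frob2 !big_ord2 !tau_mxE /flipform !flatAB_tidx /psi_norm2 !big_ord2.
by rewrite /swap23 /cycle3 !normCK !(rmorphD, rmorphM, rmorphN) /=; ring.
Qed.

Lemma Sval_rhoAC psi : Sval (rhoAC psi) = psi_norm2 psi ^+ 2
  + 2 * frob2_tauAB (swap23 psi) - frob2_tauAB psi - frob2_tauAB (cycle3 psi).
Proof.
rewrite rhoAC_swap23 Sval_rhoAB psi_norm2_swap23.
by rewrite (_ : cycle3 (swap23 psi) = swap12 (cycle3 psi)) // frob2_tauAB_swap12.
Qed.

Lemma Sval_rhoBC psi : Sval (rhoBC psi) = psi_norm2 psi ^+ 2
  + 2 * frob2_tauAB (cycle3 psi) - frob2_tauAB psi - frob2_tauAB (swap23 psi).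
Proof.
rewrite rhoBC_cycle3 Sval_rhoAB psi_norm2_cycle3.
rewrite (_ : swap23 (cycle3 psi) = swap12 psi) // frob2_tauAB_swap12.
by rewrite (_ : cycle3 (cycle3 psi) = swap12 (swap23 psi)) // frob2_tauAB_swap12.
Qed.

Lemma Sval_sub1_concurrence psi : normalized psi ->
  [/\ Sval (rhoAB psi) - 1 = 2 * concurrence (rhoAB psi) ^+ 2
        - concurrence (rhoAC psi) ^+ 2 - concurrence (rhoBC psi) ^+ 2,
      Sval (rhoAC psi) - 1 = 2 * concurrence (rhoAC psi) ^+ 2
        - concurrence (rhoAB psi) ^+ 2 - concurrence (rhoBC psi) ^+ 2
    & Sval (rhoBC psi) - 1 = 2 * concurrence (rhoBC psi) ^+ 2
        - concurrence (rhoAB psi) ^+ 2 - concurrence (rhoAC psi) ^+ 2].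
Proof.
move=> psi_1; move: (sqr_concurrences psi).
(* Abstract the concurrences before rewriting: matching one of them against the others
   triggers very expensive conversion checks. *)
generalize (concurrence (rhoAB psi)) (concurrence (rhoAC psi)) (concurrence (rhoBC psi)).
move=> cAB cAC cBC [-> -> ->].
rewrite Sval_rhoAB Sval_rhoAC Sval_rhoBC (_ : psi_norm2 psi = 1) // expr1n.
by split; ring.
Qed.

Lemma sum_sqr_concurrence_le psi : normalized psi ->
  concurrence (rhoAB psi) ^+ 2 + concurrence (rhoAC psi) ^+ 2 + concurrence (rhoBC psi) ^+ 2
  <= 4%:R / 3%:R.
Proof.
move=> psi_1; move: (sqr_concurrences psi).
generalize (concurrence (rhoAB psi)) (concurrence (rhoAC psi)) (concurrence (rhoBC psi)).
move=> cAB cAC cBC [-> -> ->].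
have := gram_tau_bound (flatAB (cycle3 psi)).
rewrite tr_gram_flatAB psi_norm2_cycle3 (_ : psi_norm2 psi = 1) // expr1n mulr1.
rewrite -/(det_tauAB (cycle3 psi)) -/(frob2_tauAB (cycle3 psi)) det_tauAB_cycle3.
rewrite mulrBr -frob2_tauAB_swap23_add => bound.
by apply: le_trans bound; rewrite le_eqVlt; apply/orP; left; apply/eqP; ring.
Qed.

End ThreeQubits.

Lemma excess_monogamy (R : numFieldType) (x y z sab sac sbc : R) :
  sab - 1 = 2 * x - y - z -> sac - 1 = 2 * y - x - z -> sbc - 1 = 2 * z - x - y ->
  x + y + z <= 4%:R / 3%:R ->
  let condA := 8%:R / 9%:R <= x + y in
  let condB := 8%:R / 9%:R <= x + z in
  let condC := 8%:R / 9%:R <= y + z in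
  (condA /\ condB) \/ (condA /\ condC) \/ (condB /\ condC) ->
  ~ (1 < sab /\ 1 < sac) /\ ~ (1 < sab /\ 1 < sbc) /\ ~ (1 < sac /\ 1 < sbc).
Proof.
move=> eab eac ebc sum_le condA condB condC.
have excess_le0 u v w s : u + v + w = x + y + z -> s - 1 = 2 * w - u - v ->
    8%:R / 9%:R <= u + v -> ~ 1 < s.
  move=> uvw es uv_ge s_gt1.
  suff : s - 1 <= 0 by rewrite subr_le0 => /(lt_le_trans s_gt1); rewrite ltxx.
  rewrite es (_ : 2 * w - u - v = 2 * (u + v + w) - 3 * (u + v)); last by ring.
  rewrite uvw subr_le0; apply: le_trans (_ : 2 * (4%:R / 3%:R) <= _).
    by rewrite ler_pM2l ?ltr0n.
  apply: le_trans (_ : 3 * (8%:R / 9%:R) <= _); last by rewrite ler_pM2l ?ltr0n.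
  by rewrite le_eqVlt; apply/orP; left; apply/eqP; field; rewrite ?pnatr_eq0.
have noA : condA -> ~ 1 < sbc by apply: (excess_le0 x y z).
have noB : condB -> ~ 1 < sac by apply: (excess_le0 x z y) => //; ring.
have noC : condC -> ~ 1 < sab by apply: (excess_le0 y z x) => //; ring.
by case=> [[/noA ? /noB ?]|[[/noA ? /noC ?]|[/noB ? /noC ?]]]; tauto.
Qed.

Theorem corollary4 (R : realType) (psi : 'I_2 -> 'I_2 -> 'I_2 -> R[i]) :
  normalized psi ->
  let CAB := concurrence (rhoAB psi) in
  let CAC := concurrence (rhoAC psi) in
  let CBC := concurrence (rhoBC psi) in
  (* condition C_ik^2 + C_jk^2 >= 8/9 for k = A, B, C *)
  let condA := 8%:R / 9%:R <= CAB ^+ 2 + CAC ^+ 2 in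
  let condB := 8%:R / 9%:R <= CAB ^+ 2 + CBC ^+ 2 in
  let condC := 8%:R / 9%:R <= CAC ^+ 2 + CBC ^+ 2 in
  (condA /\ condB) \/ (condA /\ condC) \/ (condB /\ condC) ->
  let SAB := Sval (rhoAB psi) in
  let SAC := Sval (rhoAC psi) in
  let SBC := Sval (rhoBC psi) in
  ~ (1 < SAB /\ 1 < SAC) /\ ~ (1 < SAB /\ 1 < SBC) /\ ~ (1 < SAC /\ 1 < SBC).
Proof.
move=> psi_1; have [eAB eAC eBC] := Sval_sub1_concurrence psi_1.
exact: excess_monogamy eAB eAC eBC (sum_sqr_concurrence_le psi_1).
Qed.
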